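(* In the Majority Model (MM) on the cycle $C_n=(v_0,\dots,v_{n-1})$, the number of stable colorings is $\Theta(\Phi^n)$, where $\Phi=\frac{1+\sqrt5}{2}$ is the golden ratio.
   Context: A coloring is a map from the nodes to $\{b,w\}$. In MM, all nodes update simultaneously: a node adopts the color strictly more frequent among its neighbors in the previous round and keeps its color in case of a tie. A coloring is stable if one application of the MM update rule returns the same coloring. *)

From HB Require Import structures.
From mathcomp Require Import all_boot all_order all_algebra.
Set Implicit Arguments. Unset Strict Implicit. Unset Printing Implicit Defensive.
Import Order.TTheory GRing.Theory Num.Theory.

Definition color := bool.
Definition col_b : color := true.
Definition col_w : color := false.

Definition coloring (T : finType) := {ffun T -> color}.

Definition MM_step (T : finType) (adj : rel T) (c : coloring T) : coloring T :=
  [ffun v =>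
     let nb := #|[pred u | adj v u && (c u == col_b)]| in
     let nw := #|[pred u | adj v u && (c u == col_w)]| in
     if nw < nb then col_b else if nb < nw then col_w else c v].

Definition MM_stable (T : finType) (adj : rel T) (c : coloring T) : bool :=
  MM_step adj c == c.

Definition cycle_adj (n : nat) : rel 'I_n :=
  fun i j => (val j == (val i).+1 %% n) || (val i == (val j).+1 %% n).

Definition num_stable_cycle (n : nat) : nat :=
  #|[set c : coloring 'I_n | MM_stable (@cycle_adj n) c]|.

Definition golden (R : rcfType) : R := (1 + Num.sqrt 5) / 2.

(* On a cycle every node has exactly two distinct neighbours, so MM keeps a
   node's colour unless both neighbours agree with each other and not with it:
   a colouring is stable iff no node is isolated.  Reading a stable colouring
   from v_0 gives a binary word of length n with no isolated interior letter,
   and these words satisfy a Fibonacci recursion, so there are 2 F_(n+1) of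
   them.  Conversely a word of length n - 1 that starts with a doubled letter
   and has no isolated interior letter closes up, after repeating its last
   letter, into a stable colouring; there are F_(n-1) of them.  Finally
   Phi^j <= F_(j+2) <= Phi^(j+1). *)

From HB Require Import structures.
From mathcomp Require Import all_boot all_order all_algebra.
From mathcomp Require Import lra zify.
Import Order.TTheory GRing.Theory Num.Theory.
Set Implicit Arguments. Unset Strict Implicit. Unset Printing Implicit Defensive.

Definition isolated (a b c : bool) : bool := (a == c) && (b != a).

Lemma isolated_l a b : ~~ isolated a a b.
Proof. by case: a; case: b. Qed.

Lemma isolated_r a b : ~~ isolated a b b.
Proof. by case: a; case: b. Qed.

Fixpoint isolation_free (s : seq bool) : bool :=
  if s is a :: (b :: c :: _) as t then ~~ isolated a b c && isolation_free t
  else true.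

Lemma isolation_freeP s :
  reflect (forall k, k.+2 < size s ->
             ~~ isolated (nth false s k) (nth false s k.+1) (nth false s k.+2))
          (isolation_free s).
Proof.
elim: s => [|a t IHt]; first by constructor.
case: t IHt => [|b [|c u]] IHt; try by constructor => -[|[|k]].
apply: (iffP andP) => [[free_abc /IHt free_t] [|k] //= lt_k|free_s].
  exact: free_t.
by split; [exact: (free_s 0) | apply/IHt => k; apply: (free_s k.+1)].
Qed.

Lemma isolation_free_rcons_last a t :
  isolation_free (a :: t) -> isolation_free (rcons (a :: t) (last a t)).
Proof.
move=> /isolation_freeP free_s; apply/isolation_freeP => k.
rewrite size_rcons ltnS => lt_k; rewrite !nth_rcons.
have [lt_k2 | ge_k2] := ltnP k.+2 (size (a :: t)).
  by rewrite !(ltn_trans _ lt_k2) //; apply: free_s.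
have Ek : k.+2 = size (a :: t) by apply/eqP; rewrite eqn_leq lt_k.
have lt_k1 : k.+1 < size (a :: t) by rewrite -Ek.
rewrite lt_k1 ltnW // -Ek eqxx.
by rewrite (_ : k.+1 = (size (a :: t)).-1) ?nth_last ?isolated_r // -Ek.
Qed.

Fixpoint bitseqs (n : nat) : seq (seq bool) :=
  if n is n'.+1 then map (cons true) (bitseqs n') ++ map (cons false) (bitseqs n')
  else [:: [::]].

Lemma mem_map_cons (T : eqType) (x y : T) s (L : seq (seq T)) :
  (x :: s \in map (cons y) L) = (x == y) && (s \in L).
Proof.
by apply/mapP/andP => [[t Lt [-> ->]] | [/eqP -> Ls]]; [rewrite eqxx | exists s].
Qed.

Lemma mem_bitseqs n s : (s \in bitseqs n) = (size s == n).
Proof.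
elim: n s => [|n IHn] [|x s] //=; rewrite mem_cat.
  by apply/negbTE; rewrite negb_or; apply/andP; split; apply/mapP => -[].
by rewrite !mem_map_cons IHn eqSS; case: x; rewrite /= ?orbF.
Qed.

Lemma bitseqs_uniq n : uniq (bitseqs n).
Proof.
have cons_inj (x : bool) : injective (cons x) by move=> s t [].
elim: n => [|n IHn] //=; rewrite cat_uniq !map_inj_uniq ?IHn //=.
by rewrite andbT; apply/hasPn => _ /mapP[s _ ->]; rewrite /= mem_map_cons.
Qed.

Lemma count_bitseqsS n (P : pred (seq bool)) :
  count P (bitseqs n.+1) =
  count (P \o cons true) (bitseqs n) + count (P \o cons false) (bitseqs n).
Proof. by rewrite /= count_cat !count_map. Qed.

Fixpoint fib (n : nat) : nat :=
  if n is (m.+1 as k).+1 then fib k + fib m else n.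
Arguments fib : simpl never.

Lemma fibSS n : fib n.+2 = fib n.+1 + fib n.
Proof. by []. Qed.

Lemma count_andl (T : Type) (b : bool) (P : pred T) s :
  count (fun x => b && P x) s = b * count P s.
Proof. by case: b; rewrite ?mul1n ?mul0n //; elim: s. Qed.

Definition n_free (k : nat) (x y : bool) : nat :=
  count (fun s => isolation_free [:: x, y & s]) (bitseqs k).

Lemma n_freeS k x y :
  n_free k.+1 x y =
  ~~ isolated x y true * n_free k y true + ~~ isolated x y false * n_free k y false.
Proof. by rewrite /n_free count_bitseqsS !count_andl. Qed.

Lemma n_freeE k x y : n_free k x y = if x == y then fib k.+2 else fib k.+1.
Proof.
elim: k x y => [|k IHk] x y; first by case: x; case: y.
by rewrite n_freeS !IHk !fibSS; case: x; case: y; rewrite /= ?mul1n ?mul0n ?addn0 // addnC.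
Qed.

Lemma count_isolation_free k :
  count isolation_free (bitseqs k.+2) = 2 * fib k.+3.
Proof.
have nfree x y :
  count ((isolation_free \o cons x) \o cons y) (bitseqs k) = n_free k x y by [].
by rewrite !count_bitseqsS !nfree !n_freeE /= !fibSS; lia.
Qed.

Lemma val_ordS n (v : 'I_n) : val (ordS v) = if v.+1 == n then 0 else v.+1.
Proof.
case: eqP => [Evn | ne_vn] /=; first by rewrite Evn modnn.
by rewrite modn_small // ltn_neqAle ltn_ord andbT; apply/eqP.
Qed.

Lemma val_ord_pred n (v : 'I_n) :
  val (ord_pred v) = if val v == 0 then n.-1 else (val v).-1.
Proof.
case: v => [[|w] lt_w] /=.
  by rewrite modn_small // prednK // (leq_ltn_trans _ lt_w).
by rewrite modnDr modn_small // ltnW.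
Qed.

Lemma cycle_adjE n (v u : 'I_n) :
  cycle_adj v u = (u == ordS v) || (u == ord_pred v).
Proof.
rewrite /cycle_adj; congr (_ || _).
rewrite -[val v == _]/(v == ordS u) -(inj_eq (@ord_pred_inj n)) ordSK.
by rewrite eq_sym.
Qed.

Lemma ordS_neq_ord_pred m (v : 'I_m.+3) : ordS v != ord_pred v.
Proof.
apply/negP => /eqP/(congr1 val); rewrite val_ordS val_ord_pred.
by case: v => [[|w] lt_w] /=; [lia | case: ifP => /eqP; lia].
Qed.

Lemma card_pred2I (T : finType) (a b : T) (P : pred T) : a != b ->
  #|[pred u | (u \in pred2 a b) && P u]| = P a + P b.
Proof.
move=> neq_ab; rewrite (cardD1 a) (cardD1 b) !inE !eqxx /= orbT eq_sym neq_ab.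
rewrite eq_card0 ?addn0 // => u; rewrite !inE.
by case: (u =P b); case: (u =P a).
Qed.

Lemma MM_step_cycle m (c : coloring 'I_m.+3) v :
  MM_step (@cycle_adj _) c v =
  if c (ord_pred v) == c (ordS v) then c (ordS v) else c v.
Proof.
have count_nb x : #|[pred u | cycle_adj v u && (c u == x)]| =
    (c (ordS v) == x) + (c (ord_pred v) == x).
  rewrite -(card_pred2I (fun u => c u == x) (ordS_neq_ord_pred v)).
  by apply: eq_card => u; rewrite !inE cycle_adjE.
rewrite ffunE /= !count_nb.
by case: (c (ordS v)); case: (c (ord_pred v)); case: (c v).
Qed.

Lemma MM_stable_cycleP m (c : coloring 'I_m.+3) :
  reflect (forall v, ~~ isolated (c (ord_pred v)) (c v) (c (ordS v)))
          (MM_stable (@cycle_adj _) c).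
Proof.
have stable_at v : (MM_step (@cycle_adj _) c v == c v) =
    ~~ isolated (c (ord_pred v)) (c v) (c (ordS v)).
  by rewrite MM_step_cycle; case: (c (ordS v)); case: (c (ord_pred v)); case: (c v).
apply: (iffP eqP) => [stable_c v | free_c].
  by rewrite -stable_at stable_c.
by apply/ffunP => v; apply/eqP; rewrite stable_at.
Qed.

Lemma size_fgraph_ord (T : Type) n (f : {ffun 'I_n -> T}) : size (fgraph f) = n.
Proof. by rewrite size_tuple card_ord. Qed.

Lemma isolation_free_fgraph m (c : coloring 'I_m.+3) :
  MM_stable (@cycle_adj _) c -> isolation_free (fgraph c).
Proof.
move=> /MM_stable_cycleP free_c; apply/isolation_freeP => k.
rewrite size_fgraph_ord => lt_k2.
have lt_k1 := ltnW lt_k2; have lt_k := ltnW lt_k1.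
have nthE i : i < m.+3 -> nth false (fgraph c) i = c (inord i).
  by move=> lt_i; rewrite -(nth_fgraph_ord false) inordK.
rewrite !nthE //; have := free_c (inord k.+1).
have -> : ord_pred (inord k.+1 : 'I_m.+3) = inord k.
  by apply: val_inj; rewrite val_ord_pred /= !inordK.
have -> // : ordS (inord k.+1 : 'I_m.+3) = inord k.+2.
by apply: val_inj; rewrite val_ordS /= !inordK // ltn_eqF.
Qed.

Definition coloring_of_word n (s : seq bool) : coloring 'I_n :=
  [ffun i : 'I_n => nth false s i].

Lemma coloring_of_word_inj n :
  {in [pred s | size s == n] &, injective (@coloring_of_word n)}.
Proof.
move=> s t /eqP size_s /eqP size_t /ffunP eq_st.
apply: (eq_from_nth (x0 := false)) => [|i]; first by rewrite size_s size_t.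
by rewrite size_s => lt_i; have := eq_st (Ordinal lt_i); rewrite !ffunE.
Qed.

Lemma MM_stable_coloring_of_word m s :
  size s = m.+3 -> isolation_free s ->
  nth false s 0 = nth false s 1 -> nth false s m.+1 = nth false s m.+2 ->
  MM_stable (@cycle_adj _) (@coloring_of_word m.+3 s).
Proof.
move=> size_s /isolation_freeP free_s eq01 eq_last.
apply/MM_stable_cycleP => v; rewrite !ffunE val_ordS val_ord_pred.
case: v => [[|w] lt_w] /=; first by rewrite eq01 isolated_r.
case: eqP => [[->] | ne_w]; first by rewrite eq_last isolated_l.
by apply: free_s; rewrite size_s ltn_neqAle lt_w andbT; apply/eqP.
Qed.

Lemma leq_size_inj_in (T U : eqType) (f : T -> U) (s : seq T) (t : seq U) :
  uniq s -> {in s &, injective f} -> {subset map f s <= t} -> size s <= size t.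
Proof.
move=> uniq_s inj_f sub_ft; rewrite -(size_map f).
by apply: uniq_leq_size => //; rewrite map_inj_in_uniq.
Qed.

Lemma num_stable_cycle_le m : num_stable_cycle m.+3 <= 2 * fib m.+4.
Proof.
rewrite /num_stable_cycle cardE -count_isolation_free -size_filter.
apply: (@leq_size_inj_in _ _ (fun c => fgraph c : seq bool)).
- exact: enum_uniq.
- by move=> c1 c2 _ _ /val_inj/(can_inj fgraphK).
move=> s /mapP[c]; rewrite mem_enum inE => stable_c ->.
rewrite mem_filter mem_bitseqs size_fgraph_ord eqxx andbT.
exact: isolation_free_fgraph.
Qed.

Lemma fib_le_num_stable_cycle m : fib m.+2 <= num_stable_cycle m.+3.
Proof.
pose close w := rcons [:: true, true & w] (last true (true :: w)).
have <- : n_free m true true = fib m.+2 by rewrite n_freeE.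
rewrite /n_free -size_filter /num_stable_cycle cardE.
apply: (@leq_size_inj_in _ _ (fun w => coloring_of_word m.+3 (close w))).
- exact/filter_uniq/bitseqs_uniq.
- move=> w1 w2; rewrite !mem_filter !mem_bitseqs => /andP[_ /eqP size1].
  move=> /andP[_ /eqP size2] /coloring_of_word_inj.
  by rewrite !inE !size_rcons /= size1 size2 eqxx => /(_ isT isT) /rcons_inj[].
move=> c /mapP[w]; rewrite mem_filter mem_bitseqs => /andP[free_w /eqP size_w] ->.
rewrite mem_enum inE; apply: MM_stable_coloring_of_word.
- by rewrite size_rcons /= size_w.
- exact: isolation_free_rcons_last.
- by rewrite !nth_rcons.
rewrite !nth_rcons /= size_w ltnSn ltnn eqxx.
by rewrite -size_w -[size w]/((size (true :: w)).-1) nth_last.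
Qed.

Local Open Scope ring_scope.

Section Golden.
Variable R : rcfType.
Local Notation phi := (golden R).

Lemma golden_sqr : phi ^+ 2 = phi + 1.
Proof.
have sqrt5_sqr : Num.sqrt (5 : R) ^+ 2 = 5 by rewrite sqr_sqrtr ?ler0n.
rewrite /golden; set s := Num.sqrt 5 in sqrt5_sqr *.
by rewrite !expr2 in sqrt5_sqr *; nra.
Qed.

Lemma golden_bounds : 1 <= phi <= 2.
Proof.
have sqrt5_sqr : Num.sqrt (5 : R) ^+ 2 = 5 by rewrite sqr_sqrtr ?ler0n.
have sqrt5_ge0 : 0 <= Num.sqrt (5 : R) by rewrite sqrtr_ge0.
rewrite /golden; set s := Num.sqrt 5 in sqrt5_sqr sqrt5_ge0 *.
by apply/andP; split; nra.
Qed.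

Lemma goldenSS k : phi ^+ k.+2 = phi ^+ k.+1 + phi ^+ k.
Proof. by rewrite -addn2 exprD golden_sqr mulrDr mulr1 -exprSr. Qed.

Lemma fib_golden_bounds j : phi ^+ j <= (fib j.+2)%:R <= phi ^+ j.+1.
Proof.
have [phi_ge1 phi_le2] := andP golden_bounds.
suff [] : (phi ^+ j <= (fib j.+2)%:R <= phi ^+ j.+1) /\
          (phi ^+ j.+1 <= (fib j.+3)%:R <= phi ^+ j.+2) by [].
elim: j => [|j [/andP[lo1 hi1] /andP[lo2 hi2]]].
  rewrite expr0 expr1 golden_sqr (_ : fib 2 = 1%N) // (_ : fib 3 = 2%N) //.
  by split; apply/andP; split; lra.
split; first by rewrite lo2 hi2.
rewrite fibSS natrD goldenSS [phi ^+ j.+3]goldenSS.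
by apply/andP; split; apply: lerD.
Qed.

End Golden.

Theorem theorem2p8 (R : rcfType) :
  exists (c1 c2 : R) (N : nat),
    0 < c1 /\ 0 < c2 /\
    forall n : nat, (N <= n)%N ->
      c1 * golden R ^+ n <= (num_stable_cycle n)%:R /\
      (num_stable_cycle n)%:R <= c2 * golden R ^+ n.
Proof.
have phi_gt0 : 0 < golden R by apply: lt_le_trans (andP (golden_bounds R)).1.
exists (golden R ^+ 3)^-1, 2, 3%N; split; first by rewrite invr_gt0 exprn_gt0.
split=> // -[|[|[|m]]] // _.
have /andP[fib_lo _] := fib_golden_bounds R m.
have /andP[_ fib_hi] := fib_golden_bounds R m.+2.
split.
- rewrite -[m.+3]add3n exprD mulKf ?expf_neq0 ?gt_eqF //.
  by rewrite (le_trans fib_lo) // ler_nat fib_le_num_stable_cycle.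
- rewrite (le_trans (y := (2 * fib m.+4)%N%:R)) ?ler_nat ?num_stable_cycle_le //.
  by rewrite natrM ler_wpM2l.
Qed.
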